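(* Let $X$ be a class of groups such that $\rho(G)\in X$ for every group $G$, $X$ is closed under normal subgroups, and $X$ contains all abelian groups. Let $G$ be a group and $N$ a normal subgroup of $G$ such that $\rho(N)=\{e\}$ and $\rho(G/N)=\{e\}$. Then $\rho(G)=\{e\}$.
   Context: A class of groups is a class of groups containing the trivial group and closed under isomorphism. For a class $X$ and a group $G$, $\rho(G)=\rho_X(G)$ denotes the subgroup of $G$ generated by all normal subgroups of $G$ that belong to $X$. *)

From Stdlib Require Import FunctionalExtensionality PropExtensionality ProofIrrelevance.

Record group := Group {
  carrier :> Type;
  gmul : carrier -> carrier -> carrier;
  gone : carrier;
  ginv : carrier -> carrier;
  gmulA : forall x y z, gmul x (gmul y z) = gmul (gmul x y) z;
  gmul1l : forall x, gmul gone x = x;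
  gmul1r : forall x, gmul x gone = x;
  gmulVl : forall x, gmul (ginv x) x = gone;
  gmulVr : forall x, gmul x (ginv x) = gone
}.
Arguments gmul {g}.
Arguments gone {g}.
Arguments ginv {g}.

Section GroupLemmas.
Variable G : group.
Lemma ginv_mul (x y : G) : ginv (gmul x y) = gmul (ginv y) (ginv x).
Proof.
  assert (H : gmul (gmul x y) (gmul (ginv y) (ginv x)) = gone).
  { rewrite gmulA, <- (gmulA _ x y), gmulVr, gmul1r, gmulVr. reflexivity. }
  rewrite <- (gmul1r _ (ginv (gmul x y))), <- H, gmulA, gmulVl, gmul1l.
  reflexivity.
Qed.
Lemma ginvK (x : G) : ginv (ginv x) = x.
Proof.
  rewrite <- (gmul1r _ (ginv (ginv x))), <- (gmulVl _ x), gmulA, gmulVl, gmul1l.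
  reflexivity.
Qed.
End GroupLemmas.

Definition subgroup (G : group) (H : G -> Prop) : Prop :=
  H gone /\ (forall x y, H x -> H y -> H (gmul x y)) /\ (forall x, H x -> H (ginv x)).

Definition normal (G : group) (H : G -> Prop) : Prop :=
  subgroup G H /\ (forall g x, H x -> H (gmul (ginv g) (gmul x g))).

Lemma normal_subgroup (G : group) (H : G -> Prop) : normal G H -> subgroup G H.
Proof. intros [h _]; exact h. Qed.

Section SubGroup.
Variables (G : group) (H : G -> Prop) (hH : subgroup G H).
Definition sg_T := {x : G | H x}.
Definition sg_mul (a b : sg_T) : sg_T :=
  exist _ (gmul (proj1_sig a) (proj1_sig b))
    (proj1 (proj2 hH) _ _ (proj2_sig a) (proj2_sig b)).
Definition sg_one : sg_T := exist _ gone (proj1 hH).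
Definition sg_inv (a : sg_T) : sg_T :=
  exist _ (ginv (proj1_sig a)) (proj2 (proj2 hH) _ (proj2_sig a)).
Lemma sg_eq (a b : sg_T) : proj1_sig a = proj1_sig b -> a = b.
Proof.
  destruct a as [a pa], b as [b pb]; simpl; intros ->.
  f_equal; apply proof_irrelevance.
Qed.
Definition sub_grp : group.
Proof.
  refine (@Group sg_T sg_mul sg_one sg_inv _ _ _ _ _);
  intros; apply sg_eq; simpl.
  - apply gmulA. - apply gmul1l. - apply gmul1r. - apply gmulVl. - apply gmulVr.
Defined.
End SubGroup.

(** The quotient group G/N: its elements are the left cosets gN (as sets). *)
Section Quotient.
Variables (G : group) (N : G -> Prop) (hN : normal G N).

Definition coset (g : G) : G -> Prop := fun x => N (gmul (ginv g) x).
Definition q_T := {S : G -> Prop | exists g, S = coset g}.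

Definition setmul (S T : G -> Prop) : G -> Prop :=
  fun x => exists s t, S s /\ T t /\ x = gmul s t.
Definition setinv (S : G -> Prop) : G -> Prop := fun x => S (ginv x).

Lemma N1 : N gone. Proof. exact (proj1 (proj1 hN)). Qed.
Lemma NM x y : N x -> N y -> N (gmul x y). Proof. exact (proj1 (proj2 (proj1 hN)) x y). Qed.
Lemma NV x : N x -> N (ginv x). Proof. exact (proj2 (proj2 (proj1 hN)) x). Qed.
Lemma NJ g x : N x -> N (gmul (ginv g) (gmul x g)). Proof. exact (proj2 hN g x). Qed.
Lemma NJ' g x : N x -> N (gmul g (gmul x (ginv g))).
Proof. intro h. pose proof (NJ (ginv g) x h) as h'. rewrite ginvK in h'. exact h'. Qed.

Lemma setmul_coset g h : setmul (coset g) (coset h) = coset (gmul g h).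
Proof.
  apply functional_extensionality; intro x; apply propositional_extensionality.
  unfold setmul, coset; split.
  - intros [s [t [hs [ht ->]]]].
    rewrite ginv_mul.
    replace (gmul (gmul (ginv h) (ginv g)) (gmul s t))
      with (gmul (gmul (ginv h) (gmul (gmul (ginv g) s) h)) (gmul (ginv h) t)).
    + apply NM; [|exact ht].
      rewrite gmulA. (* (h^-1 (g^-1 s)) h *)
      rewrite <- gmulA. apply NJ. exact hs.
    + repeat rewrite gmulA. rewrite <- (gmulA _ _ h (ginv h)), gmulVr, gmul1r.
      reflexivity.
  - intro hx. exists g, (gmul (ginv g) x). split; [|split].
    + rewrite gmulVl. exact N1.
    + rewrite gmulA, <- ginv_mul. exact hx.
    + rewrite gmulA, gmulVr, gmul1l. reflexivity.
Qed.

Lemma setinv_coset g : setinv (coset g) = coset (ginv g).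
Proof.
  apply functional_extensionality; intro x; apply propositional_extensionality.
  unfold setinv, coset; rewrite ginvK; split; intro hx.
  - (* N (g^-1 x^-1) -> N (g x) *)
    pose proof (NV _ hx) as h1. rewrite ginv_mul, !ginvK in h1.
    (* h1 : N (x g) ; conjugate by g^-1 *)
    pose proof (NJ' g _ h1) as h2.
    replace (gmul g x) with (gmul g (gmul (gmul x g) (ginv g))); [exact h2|].
    rewrite <- gmulA, gmulVr, gmul1r. reflexivity.
  - pose proof (NJ g _ hx) as h2.
    replace (gmul (ginv g) (gmul (gmul g x) g)) with (gmul x g) in h2
      by (rewrite gmulA, gmulA, gmulVl, gmul1l; reflexivity).
    pose proof (NV _ h2) as h3. rewrite ginv_mul in h3. exact h3.
Qed.

Lemma coset1 : coset gone = N.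
Proof.
  apply functional_extensionality; intro x; unfold coset.
  replace (ginv (@gone G)) with (@gone G) by
    (rewrite <- (gmul1l _ (ginv gone)), gmulVr; reflexivity).
  rewrite gmul1l; reflexivity.
Qed.

Definition q_mul (a b : q_T) : q_T.
Proof.
  refine (exist _ (setmul (proj1_sig a) (proj1_sig b)) _).
  destruct a as [S [g ->]], b as [T [h ->]]; simpl.
  exists (gmul g h); apply setmul_coset.
Defined.
Definition q_one : q_T := exist _ N (ex_intro _ gone (eq_sym coset1)).
Definition q_inv (a : q_T) : q_T.
Proof.
  refine (exist _ (setinv (proj1_sig a)) _).
  destruct a as [S [g ->]]; simpl.
  exists (ginv g); apply setinv_coset.
Defined.

Lemma q_eq (a b : q_T) : proj1_sig a = proj1_sig b -> a = b.
Proof.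
  destruct a as [a pa], b as [b pb]; simpl; intros ->.
  f_equal; apply proof_irrelevance.
Qed.

Definition quot : group.
Proof.
  refine (@Group q_T q_mul q_one q_inv _ _ _ _ _); intros; apply q_eq; simpl.
  - destruct x as [S [g ->]], y as [T [h ->]], z as [U [k ->]]; simpl.
    rewrite !setmul_coset, gmulA; reflexivity.
  - destruct x as [S [g ->]]; simpl.
    rewrite <- coset1, setmul_coset, gmul1l; reflexivity.
  - destruct x as [S [g ->]]; simpl.
    rewrite <- coset1, setmul_coset, gmul1r; reflexivity.
  - destruct x as [S [g ->]]; simpl.
    rewrite setinv_coset, setmul_coset, gmulVl, coset1; reflexivity.
  - destruct x as [S [g ->]]; simpl.
    rewrite setinv_coset, setmul_coset, gmulVr, coset1; reflexivity.
Defined.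
End Quotient.

Definition isomorphic (G H : group) : Prop :=
  exists f : G -> H,
    (forall x y, f (gmul x y) = gmul (f x) (f y)) /\
    (forall x y, f x = f y -> x = y) /\ (forall z, exists x, f x = z).

Definition abelian (G : group) : Prop := forall x y : G, gmul x y = gmul y x.
Definition trivial_group (G : group) : Prop := forall x : G, x = gone.

Definition group_class (X : group -> Prop) : Prop :=
  (forall G, trivial_group G -> X G) /\
  (forall G H, isomorphic G H -> X G -> X H).

(** rho_X(G): subgroup generated by all normal subgroups of G belonging to X,
    i.e. the intersection of all subgroups containing every such normal subgroup. *)
Definition rho (X : group -> Prop) (G : group) : G -> Prop :=
  fun x => forall K : G -> Prop, subgroup G K ->
    (forall (H : G -> Prop) (hH : normal G H),
        X (sub_grp G H (normal_subgroup G H hH)) -> forall y, H y -> K y) ->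
    K x.

Lemma rho_subgroup X G : subgroup G (rho X G).
Proof.
  unfold rho; split; [|split].
  - intros K [k1 _] _; exact k1.
  - intros x y hx hy K hK hc. exact (proj1 (proj2 hK) _ _ (hx K hK hc) (hy K hK hc)).
  - intros x hx K hK hc. exact (proj2 (proj2 hK) _ (hx K hK hc)).
Qed.

Definition rho_grp (X : group -> Prop) (G : group) : group :=
  sub_grp G (rho X G) (rho_subgroup X G).

Definition rho_trivial (X : group -> Prop) (G : group) : Prop :=
  forall x : G, rho X G x -> x = gone.

Definition closed_normal_sub (X : group -> Prop) : Prop :=
  forall (G : group) (H : G -> Prop) (hH : normal G H),
    X G -> X (sub_grp G H (normal_subgroup G H hH)).

(* Let R = rho(G), a normal subgroup of G lying in X. Then R ∩ N is normal in
   R, hence in X, and it is also normal in N, so R ∩ N <= rho(N) = 1. Hence R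
   maps isomorphically onto its image RN/N, a normal subgroup of G/N lying in X,
   so RN/N <= rho(G/N) = 1, i.e. R <= N and R = R ∩ N = 1. *)

Lemma mem_rho X G H (hH : normal G H) :
  X (sub_grp G H (normal_subgroup G H hH)) -> forall y, H y -> rho X G y.
Proof. intros hXH y hy K _ hK. exact (hK H hH hXH y hy). Qed.

Lemma rho_trivial_normal X G (h1 : rho_trivial X G) H (hH : normal G H) :
  X (sub_grp G H (normal_subgroup G H hH)) -> forall y, H y -> y = gone.
Proof. intros hXH y hy. exact (h1 y (mem_rho X G H hH hXH y hy)). Qed.

Lemma subgroup_conj (G : group) (K : G -> Prop) (g : G) : subgroup G K ->
  subgroup G (fun y => K (gmul (ginv g) (gmul y g))).
Proof.
  intros [k1 [kM kV]]; split; [|split].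
  - rewrite gmul1l, gmulVl; exact k1.
  - intros a b ha hb.
    replace (gmul (ginv g) (gmul (gmul a b) g)) with
      (gmul (gmul (ginv g) (gmul a g)) (gmul (ginv g) (gmul b g))).
    + exact (kM _ _ ha hb).
    + rewrite !gmulA, <- (gmulA _ _ g (ginv g)), gmulVr, gmul1r; reflexivity.
  - intros a ha.
    replace (gmul (ginv g) (gmul (ginv a) g)) with (ginv (gmul (ginv g) (gmul a g))).
    + exact (kV _ ha).
    + rewrite !ginv_mul, ginvK, gmulA; reflexivity.
Qed.

(* Conjugating a subgroup that contains every X-normal subgroup gives another
   such subgroup. *)
Lemma rho_normal X G : normal G (rho X G).
Proof.
  split; [apply rho_subgroup|].
  intros g x hx K hK hc.
  apply (hx _ (subgroup_conj G K g hK)).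
  intros H hH hXH y hy. exact (hc H hH hXH _ (proj2 hH g y hy)).
Qed.

Section Restriction.
Variables (G : group) (K : G -> Prop) (hK : subgroup G K).

Definition restrict (H : G -> Prop) : sub_grp G K hK -> Prop :=
  fun k => H (proj1_sig k).

Lemma normal_restrict H : normal G H -> normal (sub_grp G K hK) (restrict H).
Proof.
  intros [[h1 [hM hV]] hJ]; split; [split; [|split]|]; unfold restrict; simpl.
  - exact h1.
  - intros x y; apply hM.
  - intros x; apply hV.
  - intros g x; apply hJ.
Qed.
End Restriction.

Lemma isomorphic_restrict_swap G K H (hK : subgroup G K) (hH : subgroup G H)
  (pKH : subgroup (sub_grp G K hK) (restrict G K hK H))
  (pHK : subgroup (sub_grp G H hH) (restrict G H hH K)) :
  isomorphic (sub_grp _ _ pKH) (sub_grp _ _ pHK).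
Proof.
  exists (fun z : sub_grp _ _ pKH =>
            exist (restrict G H hH K)
              (exist H (proj1_sig (proj1_sig z)) (proj2_sig z))
              (proj2_sig (proj1_sig z))).
  split; [|split].
  - intros x y. apply sg_eq, sg_eq; reflexivity.
  - intros x y e. apply (f_equal (fun z => proj1_sig (proj1_sig z))) in e.
    apply sg_eq, sg_eq; exact e.
  - intros [[y hy] ky]. exists (exist _ (exist _ y ky) hy).
    apply sg_eq, sg_eq; reflexivity.
Qed.

Section QuotientImage.
Variables (G : group) (N : G -> Prop) (hN : normal G N).

Definition qproj (g : G) : quot G N hN :=
  exist _ (coset G N g) (ex_intro _ g eq_refl).

Lemma qproj_surj (q : quot G N hN) : exists g, q = qproj g.
Proof. destruct q as [S [g ->]]. exists g. apply q_eq; reflexivity. Qed.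

Lemma qproj_mul a b : qproj (gmul a b) = gmul (qproj a) (qproj b).
Proof. apply q_eq; simpl. symmetry; apply setmul_coset, hN. Qed.

Lemma qproj_inv a : qproj (ginv a) = ginv (qproj a).
Proof. apply q_eq; simpl. symmetry; apply setinv_coset, hN. Qed.

Lemma mem_coset_self g : coset G N g g.
Proof. unfold coset. rewrite gmulVl. exact (N1 G N hN). Qed.

Lemma qproj_eq a b : qproj a = qproj b -> N (gmul (ginv a) b).
Proof.
  intro e. apply (f_equal (@proj1_sig _ _)) in e. simpl in e.
  change (coset G N a b). rewrite e. apply mem_coset_self.
Qed.

Lemma qproj_eq1 a : qproj a = gone -> N a.
Proof.
  intro e. apply (f_equal (@proj1_sig _ _)) in e. simpl in e.
  rewrite <- e. apply mem_coset_self.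
Qed.

Variable K : G -> Prop.

Definition quot_image : quot G N hN -> Prop := fun q => exists k, K k /\ q = qproj k.

Lemma normal_quot_image : normal G K -> normal (quot G N hN) quot_image.
Proof.
  intros [[k1 [kM kV]] kJ]; split; [split; [|split]|].
  - exists gone. split; [exact k1|]. apply q_eq; simpl. symmetry; apply coset1.
  - intros x y [a [ka ->]] [b [kb ->]]. exists (gmul a b).
    split; [exact (kM _ _ ka kb) | symmetry; apply qproj_mul].
  - intros x [a [ka ->]]. exists (ginv a).
    split; [exact (kV _ ka) | symmetry; apply qproj_inv].
  - intros q x [a [ka ->]]. destruct (qproj_surj q) as [g ->].
    exists (gmul (ginv g) (gmul a g)). split; [exact (kJ _ _ ka)|].
    rewrite !qproj_mul, qproj_inv; reflexivity.
Qed.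

Lemma isomorphic_quot_image (hK : subgroup G K)
  (hKN : forall x, K x -> N x -> x = gone) (pQ : subgroup _ quot_image) :
  isomorphic (sub_grp G K hK) (sub_grp _ quot_image pQ).
Proof.
  pose proof hK as [k1 [kM kV]].
  exists (fun k => exist _ (qproj (proj1_sig k)) (ex_intro _ (proj1_sig k)
                    (conj (proj2_sig k) eq_refl))).
  split; [|split].
  - intros [a ka] [b kb]. apply sg_eq; simpl. apply qproj_mul.
  - intros [a ka] [b kb] e. apply (f_equal (@proj1_sig _ _)) in e. simpl in e.
    apply sg_eq; simpl.
    assert (hab1 : gmul (ginv a) b = gone).
    { apply hKN; [exact (kM _ _ (kV _ ka) kb) | exact (qproj_eq _ _ e)]. }
    rewrite <- (gmul1r _ a), <- hab1, gmulA, gmulVr, gmul1l; reflexivity.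
  - intros [q [a [ka ->]]]. exists (exist _ a ka). apply sg_eq; reflexivity.
Qed.
End QuotientImage.

Theorem lemma6p9 (X : group -> Prop)
  (hX : group_class X)
  (hrho : forall G : group, X (rho_grp X G))
  (hnorm : closed_normal_sub X)
  (hab : forall G : group, abelian G -> X G)
  (G : group) (N : G -> Prop) (hN : normal G N)
  (hN1 : rho_trivial X (sub_grp G N (normal_subgroup G N hN)))
  (hQ1 : rho_trivial X (quot G N hN)) :
  rho_trivial X G.
Proof.
  pose (R := rho X G).
  pose proof (rho_normal X G) as hR.
  assert (hRN : forall y, R y -> N y -> y = gone).
  { intros y ry ny.
    assert (hXRN : X (sub_grp _ _ (normal_subgroup _ _
                       (normal_restrict G N (normal_subgroup G N hN) R hR)))).
    { pose proof (normal_restrict G R (rho_subgroup X G) N hN) as hNR.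
      apply (proj2 hX _ _ (isomorphic_restrict_swap _ _ _ _ _
                             (normal_subgroup _ _ hNR) _)).
      apply hnorm, hrho. }
    exact (f_equal (@proj1_sig _ _)
             (rho_trivial_normal X _ hN1 _ _ hXRN (exist _ y ny) ry)). }
  assert (hXQ : X (sub_grp _ _ (normal_subgroup _ _ (normal_quot_image G N hN R hR)))).
  { apply (proj2 hX _ _ (isomorphic_quot_image G N hN R (rho_subgroup X G) hRN _)).
    apply hrho. }
  intros x rx.
  apply (hRN x rx), (qproj_eq1 G N hN).
  apply (rho_trivial_normal X _ hQ1 _ _ hXQ).
  exists x; split; [exact rx | reflexivity].
Qed.
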